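(* Let $\Sigma$ be a signed graph and let $\mathrm{acyc}_\Sigma(k)$ be the number of acyclic orientations of $\Sigma$ with exactly $k$ sinks. Then $X_\Sigma\in\mathbb{Y}$ and $\phi(X_\Sigma)=\sum_{k\ge0}\mathrm{acyc}_\Sigma(k)t^k$.
   Context: A signed graph $\Sigma$ is a finite graph (loops and multiple edges allowed) with $\mathrm{sgn}:E(\Sigma)\to\{+,-\}$; write $e:uv$ if $e$ has endpoints $u,v$. A coloring $\kappa:V(\Sigma)\to\mathbb{Z}$ is proper if $\kappa(u)\ne\mathrm{sgn}(e)\kappa(v)$ for every edge $e:uv$; $X_\Sigma=\sum_{\kappa\text{ proper}}\prod_{v}x_{\kappa(v)}$ in variables $x_i$, $i\in\mathbb{Z}$. An orientation assigns to each half-edge (a loop has two) an arrow toward or away from the vertex, such that on a positive edge exactly one of the two arrows points toward its vertex and on a negative edge both point toward or both point away. A cycle is a closed walk in which, considering only the edges of the walk, every vertex of the walk has at least one arrow pointing into it and one pointing out of it; an orientation is acyclic if it has no cycle; a sink is a vertex all of whose incident arrows point toward it (an isolated vertex is a sink). A signed poset is an acyclic orientation $P$ of a signed graph. A proper coloring $\kappa$ preserves $P$ if for every edge $e$ and each endpoint $v$ of $e$, with $u$ the other endpoint ($u=v$ for a loop), the arrow of $P$ at the incidence of $e$ with $v$ points toward $v$ iff $\kappa(v)>\mathrm{sgn}(e)\kappa(u)$. $Y_P=\sum_\kappa\prod_v x_{\kappa(v)}$ over proper colorings preserving $P$; $\mathbb{Y}$ is the $\mathbb{Q}$-span of all $Y_P$.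 $\phi:\mathbb{Y}\to\mathbb{Q}[t]$ is the (unique) $\mathbb{Q}$-linear map with $\phi(Y_P)=t^{\mathrm{sink}(P)}$ for every signed poset $P$ (its existence is established in the paper). *)

From HB Require Import structures.
From mathcomp Require Import all_boot all_order all_algebra.
From mathcomp Require Import boolp.
Set Implicit Arguments. Unset Strict Implicit. Unset Printing Implicit Defensive.
Import Order.TTheory GRing.Theory Num.Theory.
Local Open Scope ring_scope.

(* A finite signed graph on vertex set 'I_nv with edge set 'I_ne.
   ends e = (a, b) are the two endpoints of e (unordered; a = b for a loop);
   the first/second components index the two half-edges (incidences) of e.
   sgn e = true means e is positive, false means negative. *)
Record sgraph := SGraph {
  nv : nat;
  ne : nat;
  ends : 'I_ne -> 'I_nv * 'I_nv;
  sgn : 'I_ne -> bool }.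
Arguments ends : clear implicits.
Arguments sgn : clear implicits.

Definition sgnz (G : sgraph) (e : 'I_(ne G)) : int := if sgn G e then 1 else -1.
Arguments sgnz : clear implicits.

Definition proper (G : sgraph) (k : 'I_(nv G) -> int) : bool :=
  [forall e : 'I_(ne G), k (ends G e).1 != sgnz G e * k (ends G e).2].

(* An orientation: for each edge e, (o e).1 (resp. (o e).2) is true iff the
   arrow at the incidence of e with (ends e).1 (resp. (ends e).2) points
   toward that vertex. *)
Definition ori (G : sgraph) := {ffun 'I_(ne G) -> bool * bool}.

Definition valid_ori (G : sgraph) (o : ori G) : bool :=
  [forall e : 'I_(ne G),
     if sgn G e then (o e).1 != (o e).2 else (o e).1 == (o e).2].

Definition into_at (G : sgraph) (o : ori G) (w : 'I_(nv G)) (e : 'I_(ne G)) : bool :=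
  (((ends G e).1 == w) && (o e).1) || (((ends G e).2 == w) && (o e).2).
Definition out_at (G : sgraph) (o : ori G) (w : 'I_(nv G)) (e : 'I_(ne G)) : bool :=
  (((ends G e).1 == w) && ~~ (o e).1) || (((ends G e).2 == w) && ~~ (o e).2).

Definition joins (G : sgraph) (e : 'I_(ne G)) (x y : 'I_(nv G)) : bool :=
  (ends G e == (x, y)) || (ends G e == (y, x)).

Definition closed_walk (G : sgraph)
    (st : seq ('I_(nv G) * 'I_(ne G) * 'I_(nv G))) : bool :=
  [&& st != [::],
      all (fun s => joins s.1.2 s.1.1 s.2) st &
      cycle (fun a b => a.2 == b.1.1) st].

Definition is_cycle (G : sgraph) (o : ori G)
    (st : seq ('I_(nv G) * 'I_(ne G) * 'I_(nv G))) : bool :=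
  closed_walk st &&
  all (fun s => has (fun t => into_at o s.1.1 t.1.2) st &&
                has (fun t => out_at o s.1.1 t.1.2) st) st.

Definition acyclic (G : sgraph) (o : ori G) : Prop :=
  valid_ori o /\ ~ (exists st, is_cycle o st).

Definition acyclicb (G : sgraph) (o : ori G) : bool := `[< acyclic o >].

Definition is_sink (G : sgraph) (o : ori G) (v : 'I_(nv G)) : bool :=
  [forall e : 'I_(ne G),
     (((ends G e).1 == v) ==> (o e).1) && (((ends G e).2 == v) ==> (o e).2)].

Definition nsinks (G : sgraph) (o : ori G) : nat := #|[set v | is_sink o v]|.

Definition preserves (G : sgraph) (o : ori G) (k : 'I_(nv G) -> int) : bool :=
  [forall e : 'I_(ne G),
     ((o e).1 == (k (ends G e).1 > sgnz G e * k (ends G e).2)) &&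
     ((o e).2 == (k (ends G e).2 > sgnz G e * k (ends G e).1))].

(* Formal power series in the x_i (i in Z) are represented by their
   coefficient functions on monomials; the monomial prod_j x_{s_j} is
   represented by any sequence s of integers (all permutations of s give
   the same coefficient). *)
Definition Xcoef (G : sgraph) (s : seq int) : nat :=
  #|[set f : {ffun 'I_(nv G) -> seq_sub s} |
      proper (fun v => val (f v)) &&
      perm_eq [seq val (f v) | v <- enum 'I_(nv G)] s]|.

Definition Ycoef (G : sgraph) (o : ori G) (s : seq int) : nat :=
  #|[set f : {ffun 'I_(nv G) -> seq_sub s} |
      [&& proper (fun v => val (f v)), preserves o (fun v => val (f v)) &
          perm_eq [seq val (f v) | v <- enum 'I_(nv G)] s]]|.

Record sposet := SPoset { spG : sgraph; spO : ori spG }.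
Definition is_sposet (P : sposet) : Prop := acyclic (spO P).

(* a finite Q-linear combination of Y_P's, and its image under phi *)
Definition Ycomb (rep : seq (rat * sposet)) (s : seq int) : rat :=
  \sum_(p <- rep) p.1 * (Ycoef (spO p.2) s)%:R.
Definition phi_rep (rep : seq (rat * sposet)) : {poly rat} :=
  \sum_(p <- rep) p.1 *: 'X^(nsinks (spO p.2)).

Definition acyc (G : sgraph) (k : nat) : nat :=
  #|[set o : ori G | acyclicb o && (nsinks o == k)]|.

Definition all_sposets (rep : seq (rat * sposet)) : Prop :=
  foldr (fun p acc => is_sposet p.2 /\ acc) True rep.

From Pilot Require Import Defs.
From HB Require Import structures.
From mathcomp Require Import all_boot all_order all_algebra.
From mathcomp Require Import boolp zify ring.
Set Implicit Arguments. Unset Strict Implicit. Unset Printing Implicit Defensive.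
Import Order.TTheory GRing.Theory Num.Theory.
Local Open Scope ring_scope.

(* Specialise the variables of a series in x_i (i in Z) to x_(k+1) = t - 1,
   x_(-(k+1)) = 0 and x_i = -1 for |i| <= k. For Y_P this is a sum over the
   P-preserving colorings with values in [-(k+1), k+1]; grouping them by the
   vertices receiving the extreme colors +-(k+1), which must be sinks, resp.
   sources, of the part of P they sit in, expresses it through the numbers of
   P-preserving colorings of vertex sets U with colors in [-k, k]. These are
   polynomials in k taking the value (-1)^|U| at k = -1, because every
   restriction of an acyclic orientation with an edge has a vertex that is a
   sink but not a source, or conversely. Hence the value at k = -1 is a linear
   functional mapping Y_P to t^sink(P), so it computes phi. Every proper
   coloring preserves exactly one orientation, which is acyclic, so X_Sigma
   is the sum of Y_P over the acyclic orientations P, and the formula for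
   phi(X_Sigma) follows. *)

Section FiniteDifferences.
Variable R : comNzRingType.
Implicit Types f g : nat -> R.

Fixpoint fdiff (j : nat) f (i : nat) : R :=
  if j is j'.+1 then fdiff j' f i.+1 - fdiff j' f i else f i.

Lemma eq_fdiff j f g i : f =1 g -> fdiff j f i = fdiff j g i.
Proof. by move=> /funext ->. Qed.

Lemma fdiff_sum (I : Type) (r : seq I) (P : pred I) (F : I -> nat -> R) j i :
  fdiff j (fun k => \sum_(x <- r | P x) F x k) i = \sum_(x <- r | P x) fdiff j (F x) i.
Proof. by elim: j i => [|j IH] i //=; rewrite !IH -sumrB. Qed.

Lemma fdiff_mull c j f i : fdiff j (fun k => c * f k) i = c * fdiff j f i.
Proof. by elim: j i => [|j IH] i //=; rewrite !IH mulrBr. Qed.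

Lemma fdiff_shift j f i : fdiff j (fun k => f k.+1) i = fdiff j f i.+1.
Proof. by elim: j i => //= j IH i; rewrite !IH. Qed.

Lemma fdiffSr j f i : fdiff j.+1 f i = fdiff j (fun k => f k.+1 - f k) i.
Proof.
elim: j i => [|j IH] i //.
by rewrite -[LHS]/(fdiff j.+1 f i.+1 - fdiff j.+1 f i) !IH.
Qed.

Lemma fdiff_eq0_leq m n f :
  (forall i, fdiff m f i = 0) -> (m <= n)%N -> forall i, fdiff n f i = 0.
Proof.
move=> f0 /subnKC <-; elim: (n - m)%N => [|p IH] i; first by rewrite addn0.
by rewrite addnS /= !IH subr0.
Qed.

(* Newton's forward formula evaluated at -1: if the (d+1)-th differences of
   f vanish, this is the value at -1 of the polynomial interpolating f. *)
Definition extrap_m1 d f := \sum_(j < d.+1) (-1) ^+ j * fdiff j f 0.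

Lemma eq_extrap_m1 d f g : f =1 g -> extrap_m1 d f = extrap_m1 d g.
Proof. by move=> /funext ->. Qed.

Lemma extrap_m1_sum d (I : Type) (r : seq I) (P : pred I) (F : I -> nat -> R) :
  extrap_m1 d (fun k => \sum_(x <- r | P x) F x k) = \sum_(x <- r | P x) extrap_m1 d (F x).
Proof.
rewrite /extrap_m1 exchange_big; apply: eq_bigr => j _.
by rewrite fdiff_sum mulr_sumr.
Qed.

Lemma extrap_m1_mull d c f : extrap_m1 d (fun k => c * f k) = c * extrap_m1 d f.
Proof.
rewrite /extrap_m1 mulr_sumr; apply: eq_bigr => j _.
by rewrite fdiff_mull mulrCA.
Qed.

Lemma extrap_m1_shift d f :
  (forall i, fdiff d.+1 f i = 0) -> extrap_m1 d (fun k => f k.+1) = f 0%N.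
Proof.
move=> fd0; rewrite /extrap_m1.
pose a j := (-1) ^+ j * fdiff j f 0.
transitivity (\sum_(j < d.+1) - (a j.+1 - a j)).
  by apply: eq_bigr => j _; rewrite fdiff_shift /a [fdiff j.+1 f 0]/= exprS; ring.
rewrite sumrN -(big_mkord xpredT (fun j => a j.+1 - a j)) telescope_sumr //.
by rewrite /a fd0 mulr0 sub0r opprK mul1r.
Qed.

End FiniteDifferences.

Definition bsign (s : bool) : int := if s then 1 else -1.

Definition edge_ok (s o1 o2 : bool) (ca cb : int) : bool :=
  [&& ca != bsign s * cb, o1 == (bsign s * cb < ca) & o2 == (bsign s * ca < cb)].

Definition mark_of (m : nat) (z : int) : option bool :=
  if z == m.+1%:Z then Some true else if z == - m.+1%:Z then Some false else None.

Definition has_mark (m : nat) (x : option bool) (c : int) : bool :=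
  match x with
  | Some true => c == m.+1%:Z
  | Some false => c == - m.+1%:Z
  | None => (- m%:Z <= c) && (c <= m%:Z)
  end.

Lemma mark_of_has_mark m x z : has_mark m x z -> mark_of m z = x.
Proof.
by rewrite /mark_of; case: x => [[]|] /= h; do 2?[case: ifP => //]; lia.
Qed.

(* The arrow at a top-colored end points in, at a bottom-colored end out. *)
Definition marks_ok (xa xb : option bool) (o1 o2 : bool) : bool :=
  (if xa is Some b then o1 == b else true) && (if xb is Some b then o2 == b else true).

Lemma edge_ok_marks s o1 o2 m ca cb xa xb :
  (if s then o1 != o2 else o1 == o2) -> has_mark m xa ca -> has_mark m xb cb ->
  edge_ok s o1 o2 ca cb =
  ((xa == None) && (xb == None) ==> edge_ok s o1 o2 ca cb) && marks_ok xa xb o1 o2.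
Proof.
rewrite /edge_ok /marks_ok /has_mark /bsign.
by case: xa => [[]|]; case: xb => [[]|]; case: s; case: o1; case: o2 => //= _;
  rewrite ?mul1r ?mulN1r ?andbT; lia.
Qed.

Lemma card_in_bij (T1 T2 : finType) (A : {set T1}) (B : {set T2}) (f : T1 -> T2) :
  {in A &, injective f} -> {in A, forall x, f x \in B} ->
  {in B, forall y, exists2 x, x \in A & f x = y} -> #|B| = #|A|.
Proof.
move=> f_inj fAB f_onto; rewrite -(card_in_imset f_inj).
suff -> : B = f @: A by [].
apply/setP => y; apply/idP/imsetP => [/f_onto [x xA <-]|[x xA ->]]; first by exists x.
exact: fAB.
Qed.

Definition zcol k (c : 'I_(k.*2.+1)) : int := (c : nat)%:Z - k%:Z.

Lemma zcol_bounds k (c : 'I_(k.*2.+1)) : (- k%:Z <= zcol c) && (zcol c <= k%:Z).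
Proof. by rewrite /zcol; have := ltn_ord c; move: (nat_of_ord c); rewrite -addnn; lia. Qed.

Lemma zcol_inj k : injective (@zcol k).
Proof. by move=> a b; rewrite /zcol => h; apply: val_inj => /=; lia. Qed.

Lemma has_mark_zcol k (c : 'I_(k.+1.*2.+1)) : has_mark k (mark_of k (zcol c)) (zcol c).
Proof.
rewrite /mark_of; have := zcol_bounds c.
by do 2?[case: ifP => [/eqP -> //|/eqP ?]] => /=; lia.
Qed.

Section Peeling.
Variables (G : sgraph) (o : ori G).
Hypothesis o_valid : valid_ori o.
Local Notation V := 'I_(nv G).
Local Notation marking := {ffun V -> option bool}.
Implicit Types (U : {set V}) (ch : marking).

Definition inside U (e : 'I_(ne G)) := ((ends G e).1 \in U) && ((ends G e).2 \in U).

Definition ok_on U (c : V -> int) := [forall e, inside U e ==>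
  edge_ok (sgn G e) (o e).1 (o e).2 (c (ends G e).1) (c (ends G e).2)].

Definition colorings k U := [set x : {ffun V -> 'I_(k.*2.+1)} |
  [forall v, (v \notin U) ==> (zcol (x v) == 0)] && ok_on U (fun v => zcol (x v))].

Definition ncol U k := #|colorings k U|.

Definition marks k (x : {ffun V -> 'I_(k.+1.*2.+1)}) : marking :=
  [ffun v => mark_of k (zcol (x v))].

Definition unmarked U ch := [set v in U | ch v == None].

Definition admissible U ch :=
  [forall v, (v \notin U) ==> (ch v == None)] &&
  [forall e, inside U e ==> marks_ok (ch (ends G e).1) (ch (ends G e).2) (o e).1 (o e).2].

Definition lower k ch (x : {ffun V -> 'I_(k.+1.*2.+1)}) : {ffun V -> 'I_(k.*2.+1)} :=
  [ffun v => if ch v is None then inord (x v).-1 else inord k].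

Definition raise k ch (x : {ffun V -> 'I_(k.*2.+1)}) : {ffun V -> 'I_(k.+1.*2.+1)} :=
  [ffun v => match ch v with
             | Some true => inord k.+1.*2 | Some false => inord 0 | None => inord (x v).+1 end].

Lemma zcol_raise k ch (x : {ffun V -> 'I_(k.*2.+1)}) v :
  zcol (raise ch x v) = match ch v with
    | Some true => k.+1%:Z | Some false => - k.+1%:Z | None => zcol (x v) end.
Proof.
rewrite /raise ffunE /zcol; have := ltn_ord (x v); move: (nat_of_ord (x v)) => n.
by case: (ch v) => [[]|] h; rewrite inordK; rewrite -?addnn in h *; lia.
Qed.

Lemma has_mark_raise k ch (x : {ffun V -> 'I_(k.*2.+1)}) v :
  has_mark k (ch v) (zcol (raise ch x v)).
Proof. by rewrite zcol_raise; case: (ch v) => [[]|] //=; apply: zcol_bounds. Qed.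

Lemma zcol_lower k ch (x : {ffun V -> 'I_(k.+1.*2.+1)}) v : has_mark k (ch v) (zcol (x v)) ->
  zcol (lower ch x v) = if ch v is None then zcol (x v) else 0.
Proof.
rewrite /lower ffunE /zcol; have := ltn_ord (x v); move: (nat_of_ord (x v)) => n.
case: (ch v) => [b|] h /= hb; rewrite inordK ?subrr //; rewrite -?addnn in h *; lia.
Qed.

Lemma inside_unmarked U ch e : inside (unmarked U ch) e =
  [&& inside U e, ch (ends G e).1 == None & ch (ends G e).2 == None].
Proof. by rewrite /inside !inE -!andbA; do !bool_congr. Qed.

Lemma ok_on_marks k U ch (x : {ffun V -> 'I_(k.+1.*2.+1)}) (x' : {ffun V -> 'I_(k.*2.+1)}) :
  (forall v, has_mark k (ch v) (zcol (x v))) ->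
  (forall v, ch v = None -> zcol (x' v) = zcol (x v)) ->
  ok_on U (fun v => zcol (x v)) =
  ok_on (unmarked U ch) (fun v => zcol (x' v)) &&
  [forall e, inside U e ==> marks_ok (ch (ends G e).1) (ch (ends G e).2) (o e).1 (o e).2].
Proof.
move=> xm x'x.
have edgeE e : inside U e ->
  edge_ok (sgn G e) (o e).1 (o e).2 (zcol (x (ends G e).1)) (zcol (x (ends G e).2)) =
  (inside (unmarked U ch) e ==>
     edge_ok (sgn G e) (o e).1 (o e).2 (zcol (x' (ends G e).1)) (zcol (x' (ends G e).2)))
  && marks_ok (ch (ends G e).1) (ch (ends G e).2) (o e).1 (o e).2.
  move=> ue; rewrite (edge_ok_marks _ (xm _) (xm _)); last exact: (forallP o_valid e).
  by rewrite inside_unmarked ue /=; case: eqP => [e1|]; case: eqP => [e2|] //=; rewrite !x'x.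
apply/forallP/andP => [ok|[/forallP ok' /forallP mk] e].
- split; apply/forallP => e; apply/implyP => ue.
  + have ue' : inside U e by move: ue; rewrite inside_unmarked => /andP[].
    by have := implyP (ok e) ue'; rewrite edgeE // ue => /andP[].
  + by have := implyP (ok e) ue; rewrite edgeE // => /andP[].
- by apply/implyP => ue; rewrite edgeE // ok' (implyP (mk e) ue).
Qed.

Lemma lower_colorings k U x : x \in colorings k.+1 U ->
  admissible U (marks x) && (lower (marks x) x \in colorings k (unmarked U (marks x))).
Proof.
rewrite !inE => /andP[/forallP off ok].
have xm v : has_mark k (marks x v) (zcol (x v)) by rewrite ffunE; apply: has_mark_zcol.
have xlx v : marks x v = None -> zcol (lower (marks x) x v) = zcol (x v).
  by move=> xv; rewrite zcol_lower // xv.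
rewrite (ok_on_marks U xm xlx) in ok; case/andP: ok => ok mk.
rewrite /admissible mk ok !andbT.
apply/andP; split; apply/forallP => v; apply/implyP => vU.
- have /eqP x0 := implyP (off v) vU.
  by rewrite ffunE x0 (@mark_of_has_mark k None) //=; lia.
- rewrite zcol_lower //; move: vU; rewrite inE negb_and.
  by case: (marks x v) => [b|] //=; rewrite orbF; apply: (implyP (off v)).
Qed.

Lemma raise_colorings k U ch x' : admissible U ch -> x' \in colorings k (unmarked U ch) ->
  [/\ raise ch x' \in colorings k.+1 U, marks (raise ch x') = ch & lower ch (raise ch x') = x'].
Proof.
move=> /andP[/forallP off mk]; rewrite inE => /andP[/forallP off' ok'].
have x'x v : ch v = None -> zcol (x' v) = zcol (raise ch x' v) by rewrite zcol_raise => ->.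
have x'0 v : ch v != None -> zcol (x' v) = 0.
  by move=> chv; apply/eqP/(implyP (off' v)); rewrite inE negb_and chv orbT.
split.
- rewrite inE (ok_on_marks U (has_mark_raise ch x') x'x) ok' mk !andbT.
  apply/forallP => v; apply/implyP => vU.
  have /eqP chv := implyP (off v) vU.
  by rewrite -x'x //; apply: (implyP (off' v)); rewrite inE (negbTE vU).
- by apply/ffunP => v; rewrite ffunE; apply: mark_of_has_mark; apply: has_mark_raise.
- apply/ffunP => v; apply: zcol_inj; rewrite zcol_lower ?has_mark_raise //.
  by case E: (ch v) => [b|]; [rewrite x'0 ?E | rewrite zcol_raise E].
Qed.

Lemma raise_lower k x : raise (marks x) (@lower k (marks x) x) = x.
Proof.
apply/ffunP => v; apply: zcol_inj; rewrite zcol_raise.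
have := has_mark_zcol (x v); rewrite ffunE.
case E: (mark_of k (zcol (x v))) => [[]|] /=; try by move/eqP.
by move=> h; rewrite zcol_lower ffunE E.
Qed.

Lemma card_marks_fiber k U ch :
  #|[set x in colorings k.+1 U | marks x == ch]| = (admissible U ch * ncol (unmarked U ch) k)%N.
Proof.
case adm: (admissible U ch); last first.
  apply/eqP; rewrite mul0n cards_eq0; apply/eqP/setP => x; rewrite in_set in_set0.
  apply/negbTE/andP => -[xC /eqP xch]; have := lower_colorings xC.
  by rewrite xch adm.
rewrite mul1n; apply: (card_in_bij (f := raise ch)).
- move=> a b aC bC eq_ab.
  have [_ _ <-] := raise_colorings adm aC.
  by have [_ _ <-] := raise_colorings adm bC; rewrite eq_ab.
- by move=> a aC; have [h1 h2 _] := raise_colorings adm aC; rewrite inE h1 h2 eqxx.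
- move=> y; rewrite inE => /andP[yC /eqP ych]; exists (lower ch y).
    by have := lower_colorings yC; rewrite ych => /andP[].
  by rewrite -ych raise_lower.
Qed.

End Peeling.

Lemma sum_option (R : nmodType) (F : option bool -> R) :
  \sum_(x : option bool) F x = F None + F (Some true) + F (Some false).
Proof. by rewrite /index_enum !unlock /= !unlock /= addr0 addrA. Qed.

Section Reciprocity.
Variables (G : sgraph) (o : ori G).
Local Notation V := 'I_(nv G).
Local Notation marking := {ffun V -> option bool}.
Implicit Types (U : {set V}) (ch : marking).

(* [arrows_at U v true] (resp. [false]): v is a sink (resp. source) of the
   restriction of o to the edges inside U; an isolated vertex is both. *)
Definition arrows_at U v (b : bool) := (v \in U) && [forall e, inside U e ==>
  (((ends G e).1 == v) ==> ((o e).1 == b)) && (((ends G e).2 == v) ==> ((o e).2 == b))].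

Definition strict_extreme_on U := [exists e, inside U e] ->
  exists2 v, v \in U & arrows_at U v true != arrows_at U v false.

Lemma admissibleE U ch :
  admissible o U ch = [forall v, if ch v is Some b then arrows_at U v b else true].
Proof.
apply/andP/forallP => [[/forallP off /forallP mk] v | ok].
  case chv: (ch v) => [b|] //; rewrite /arrows_at.
  have -> : v \in U by apply: contraT => vU; move: (implyP (off v) vU); rewrite chv.
  apply/forallP => e; apply/implyP => /(implyP (mk e)) mk_e.
  by apply/andP; split; apply/implyP => /eqP ev; move: mk_e; rewrite ev chv => /andP[].
have arrowsU v b : arrows_at U v b -> v \in U by case/andP.
split; apply/forallP.
  move=> v; apply/implyP => vU.
  by have := ok v; case: (ch v) => // b /arrowsU; rewrite (negbTE vU).
move=> e; apply/implyP => ue; apply/andP; split.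
  case chv: (ch (ends G e).1) (ok (ends G e).1) => [b|] // /andP[_ /forallP/(_ e)].
  by rewrite ue eqxx => /andP[].
case chv: (ch (ends G e).2) (ok (ends G e).2) => [b|] // /andP[_ /forallP/(_ e)].
by rewrite ue eqxx => /andP[].
Qed.

Lemma sum_admissible_prod (R : comNzRingType) U (F : V -> option bool -> R) :
  \sum_(ch | admissible o U ch) \prod_v F v (ch v) =
  \prod_v (F v None + (arrows_at U v true)%:R * F v (Some true)
                    + (arrows_at U v false)%:R * F v (Some false)).
Proof.
pose allowed v x := if x is Some b then arrows_at U v b else true.
rewrite (eq_bigl (fun ch => [forall v, allowed v (ch v)])); last first.
  by move=> ch; rewrite admissibleE.
rewrite big_mkcond.
under eq_bigr => ch _.
  have -> : (if [forall v, allowed v (ch v)] then \prod_v F v (ch v) else 0) =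
            \prod_v (if allowed v (ch v) then F v (ch v) else 0).
    case: forallP => [ok | /forallP]; first by apply: eq_bigr => v _; rewrite ok.
    rewrite negb_forall => /existsP[v notok].
    by rewrite (bigD1 v) //= (negbTE notok) mul0r.
  over.
rewrite -(bigA_distr_bigA (fun v x => if allowed v x then F v x else 0)).
apply: eq_bigr => v _; rewrite sum_option /allowed.
by case: (arrows_at U v true); case: (arrows_at U v false); rewrite ?mul1r ?mul0r ?addr0.
Qed.

Lemma ncol0 U : ncol o U 0 = ~~ [exists e, inside U e].
Proof.
have zcol0 (c : 'I_(0.*2.+1)) : zcol c = 0 by rewrite (ord1 c).
case: existsP => [[e ue]|noedge] /=.
  apply/eqP; rewrite cards_eq0; apply/eqP/setP => x; rewrite in_set in_set0.
  apply/negbTE/negP => /andP[_ /forallP/(_ e)]; rewrite ue /edge_ok.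
  by rewrite !zcol0 mulr0 eqxx.
rewrite /ncol; have -> : colorings o 0 U = setT.
  apply/setP => x; rewrite !inE; apply/andP; split; apply/forallP => y.
    by rewrite zcol0 eqxx implybT.
  by apply/implyP => uy; case: noedge; exists y.
by rewrite cardsT card_ffun !card_ord exp1n.
Qed.

Definition no_marks : marking := [ffun _ => None].

Lemma admissible_no_marks U : admissible o U no_marks.
Proof. by apply/andP; split; apply/forallP => x; rewrite !ffunE // implybT. Qed.

Lemma unmarked_no_marks U : unmarked U no_marks = U.
Proof. by apply/setP => v; rewrite !inE ffunE eqxx andbT. Qed.

Lemma card_unmarked_lt U ch :
  admissible o U ch -> ch != no_marks -> (#|unmarked U ch| < #|U|)%N.
Proof.
move=> /andP[/forallP off _] ch_marked; apply: proper_card; apply/properP; split.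
  by apply/subsetP => v; rewrite inE => /andP[].
have [v chv] : exists v, ch v != None.
  apply/existsP; rewrite -negb_forall; apply: contra ch_marked => /forallP none.
  by apply/eqP/ffunP => v; rewrite ffunE; apply/eqP.
exists v; last by rewrite inE (negbTE chv) andbF.
by apply: contraR chv => vU; apply: (implyP (off v) vU).
Qed.

Section Ring.
Variable R : comNzRingType.
Hypothesis o_valid : valid_ori o.

Lemma sum_colorings_by_marks k U (h : marking -> R) :
  \sum_(x in colorings o k.+1 U) h (marks x) =
  \sum_(ch | admissible o U ch) h ch * (ncol o (unmarked U ch) k)%:R.
Proof.
rewrite (partition_big (@marks _ k) xpredT) //= [RHS]big_mkcond; apply: eq_bigr => ch _.
rewrite (eq_bigr (fun _ => h ch)); last by move=> x /andP[_ /eqP ->].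
rewrite (@sumr_const _ _ [pred x | (x \in colorings o k.+1 U) && (marks x == ch)]).
rewrite (eq_card (B := [set x in colorings o k.+1 U | marks x == ch])); last first.
  by move=> x; rewrite !inE.
by rewrite card_marks_fiber //; case: (admissible o U ch); rewrite ?mul1n ?mul0n ?mulr_natr.
Qed.

Definition ncolr U k : R := (ncol o U k)%:R.

Lemma ncolrS U k : ncolr U k.+1 = \sum_(ch | admissible o U ch) ncolr (unmarked U ch) k.
Proof.
have := sum_colorings_by_marks k U (fun _ => 1).
by rewrite sumr_const; under eq_bigr do rewrite mul1r.
Qed.

Lemma ncolr_diff U k :
  ncolr U k.+1 - ncolr U k =
  \sum_(ch | admissible o U ch && (ch != no_marks)) ncolr (unmarked U ch) k.
Proof.
by rewrite ncolrS (bigD1 no_marks) ?admissible_no_marks //= unmarked_no_marks addrC addrK.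
Qed.

(* The sum factors over the vertices, and a vertex that is a sink of U but
   not a source (or conversely) contributes the factor -1 + 1 = 0. *)
Lemma sum_sign_admissible U : strict_extreme_on U ->
  \sum_(ch | admissible o U ch) (-1) ^+ #|unmarked U ch| = ncolr U 0.
Proof.
move=> sink_or_source.
pose F v (x : option bool) : R := if (v \in U) && (x == None) then -1 else 1.
transitivity (\sum_(ch | admissible o U ch) \prod_v F v (ch v)).
  apply: eq_bigr => ch _; rewrite -prodr_const big_mkcond /=.
  by apply: eq_bigr => v _; rewrite inE.
rewrite sum_admissible_prod /ncolr ncol0 /F.
have arrowsU v b : arrows_at U v b -> v \in U by case/andP.
case: (boolP [exists e, inside U e]) => [edge | noedge] /=.
  have [v vU sv] := sink_or_source edge.
  rewrite (bigD1 v) //= vU /=.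
  by move: sv; case: (arrows_at U v true); case: (arrows_at U v false) => //= _; ring.
apply: big1 => v _; case vU: (v \in U) => /=.
  have isolated b : arrows_at U v b.
    rewrite /arrows_at vU; apply/forallP => e; apply/implyP => ue.
    by case/negP: noedge; apply/existsP; exists e.
  by rewrite !isolated /=; ring.
have notU b : arrows_at U v b = false by apply/negbTE/negP => /arrowsU; rewrite vU.
by rewrite !notU !mul0r !addr0.
Qed.

Lemma ncol_reciprocity d U : (forall U, strict_extreme_on U) ->
  (#|U| <= d)%N ->
  (forall i, fdiff #|U|.+1 (ncolr U) i = 0) /\ extrap_m1 d (ncolr U) = (-1) ^+ #|U|.
Proof.
move=> extremes; have [m ltUm] := ubnP #|U|; elim: m U ltUm => // m IH U /ltnSE leUm leUd.
have IHch ch : admissible o U ch && (ch != no_marks) ->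
    (forall i, fdiff #|unmarked U ch|.+1 (ncolr (unmarked U ch)) i = 0) /\
    extrap_m1 d (ncolr (unmarked U ch)) = (-1) ^+ #|unmarked U ch|.
  case/andP=> adm marked; have := card_unmarked_lt adm marked.
  by move=> ltU; apply: IH; lia.
have diffU0 i : fdiff #|U|.+1 (ncolr U) i = 0.
  rewrite fdiffSr; under eq_fdiff => k do rewrite ncolr_diff.
  rewrite fdiff_sum; apply: big1 => ch chP.
  apply: (fdiff_eq0_leq (proj1 (IHch ch chP))).
  by case/andP: chP => adm marked; apply: card_unmarked_lt.
split=> //.
have := extrap_m1_shift (fdiff_eq0_leq diffU0 (leUd : #|U| < d.+1)%N).
under eq_extrap_m1 => k do rewrite ncolrS.
rewrite extrap_m1_sum.
rewrite (bigD1 no_marks) ?admissible_no_marks //= unmarked_no_marks.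
have := sum_sign_admissible (extremes U).
rewrite (bigD1 no_marks) ?admissible_no_marks //= unmarked_no_marks => <-.
rewrite (eq_bigr (fun ch => (-1) ^+ #|unmarked U ch|)) => [/addIr //|ch chP].
exact: (proj2 (IHch ch chP)).
Qed.

End Ring.
End Reciprocity.

Section Walks.
Variables (G : sgraph) (o : ori G).
Local Notation V := 'I_(nv G).
Local Notation E := 'I_(ne G).
Local Notation step := ('I_(nv G) * 'I_(ne G) * 'I_(nv G))%type.
Implicit Types (st : seq step) (U : {set V}).

Lemma joins_sym (e : E) x y : joins e x y = joins e y x.
Proof. by rewrite /joins orbC. Qed.

Lemma joins_incident (e : E) x y : joins e x y -> ((ends G e).1 == x) || ((ends G e).2 == x).
Proof. by rewrite /joins => /orP[] /eqP -> /=; rewrite eqxx ?orbT. Qed.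

Lemma joins_other (e : E) w :
  ((ends G e).1 == w) || ((ends G e).2 == w) ->
  joins e w (if (ends G e).1 == w then (ends G e).2 else (ends G e).1).
Proof.
rewrite /joins; case: eqP => [<-|_] /= h; first by rewrite -surjective_pairing eqxx.
by move/eqP: h => <-; rewrite -surjective_pairing eqxx orbT.
Qed.

Lemma cycle_detour st (s : step) (e : E) (y : V) :
  s \in st -> cycle (fun a b : step => a.2 == b.1.1) st ->
  exists i, cycle (fun a b : step => a.2 == b.1.1) ((s.1.1, e, y) :: (y, e, s.1.1) :: rot i st).
Proof.
move=> sin; case: (rot_to sin) => i st' st_i; rewrite -(rot_cycle i) st_i => st_cyc.
by exists i; rewrite st_i; move: st_cyc; rewrite /= !rcons_path /= !eqxx => /andP[-> ->].
Qed.

Definition walk_inside U st := all (fun s => inside U s.1.2) st.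

Definition n_unused st := #|[set e | e \notin [seq s.1.2 | s <- st]]|.

Definition in_and_out U := forall w (f : E),
  inside U f -> ((ends G f).1 == w) || ((ends G f).2 == w) ->
  (exists2 e, inside U e & into_at o w e) /\ (exists2 e, inside U e & out_at o w e).

Lemma no_strict_extreme_in_and_out U :
  {in U, forall v, arrows_at o U v true = arrows_at o U v false} -> in_and_out U.
Proof.
move=> sink_source w f fU f_inc.
have wU : w \in U by case/andP: fU => f1U f2U; case/orP: f_inc => /eqP <-.
have not_sink : ~~ arrows_at o U w true.
  apply/negP => w_sink; have w_source : arrows_at o U w false by rewrite -sink_source.
  move: w_sink w_source => /andP[_ /forallP /(_ f)] + /andP[_ /forallP /(_ f)].
  rewrite fU /=; case/orP: f_inc => /eqP ->; rewrite eqxx /=.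
    by move=> /andP[/eqP -> _] /andP[].
  by rewrite andbC => /andP[/eqP -> _]; rewrite andbC => /andP[].
have not_source : ~~ arrows_at o U w false by rewrite -sink_source.
split.
  move: not_source; rewrite /arrows_at wU negb_forall => /existsP [e].
  rewrite negb_imply => /andP[eU e_in]; exists e => //; move: e_in; rewrite /into_at.
  by case: ((ends G e).1 == w); case: ((ends G e).2 == w); case: (o e).1; case: (o e).2.
move: not_sink; rewrite /arrows_at wU negb_forall => /existsP [e].
rewrite negb_imply => /andP[eU e_out]; exists e => //; move: e_out; rewrite /out_at.
by case: ((ends G e).1 == w); case: ((ends G e).2 == w); case: (o e).1; case: (o e).2.
Qed.

Section InAndOut.
Variable U : {set V}.
Hypothesis in_out : in_and_out U.

(* A closed walk that is not a cycle has a vertex lacking an in- or out-arrow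
   among the walk's edges; a detour along the missing edge uses one more edge. *)
Lemma closed_walk_detour st : closed_walk st -> walk_inside U st -> ~~ is_cycle o st ->
  exists st', [/\ closed_walk st', walk_inside U st' & (n_unused st' < n_unused st)%N].
Proof.
move=> cw stU; rewrite /is_cycle cw /= => /allPn [s sin /nandP missing].
have /andP[_ /andP[/allP st_joins st_cyc]] := cw.
have s_inc := joins_incident (st_joins s sin).
have [[ei eiU ei_in] [eo eoU eo_out]] := in_out (allP stU s sin) s_inc.
suff detour e : inside U e -> ((ends G e).1 == s.1.1) || ((ends G e).2 == s.1.1) ->
    e \notin [seq t.1.2 | t <- st] ->
    exists st', [/\ closed_walk st', walk_inside U st' & (n_unused st' < n_unused st)%N].
  case: missing => [no_in|no_out].
    apply: (detour ei eiU); first by move: ei_in => /orP[]/andP[-> _]; rewrite ?orbT.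
    by apply/mapP => -[t tin eit]; move/hasPn: no_in => /(_ t tin); rewrite -eit ei_in.
  apply: (detour eo eoU); first by move: eo_out => /orP[]/andP[-> _]; rewrite ?orbT.
  by apply/mapP => -[t tin eot]; move/hasPn: no_out => /(_ t tin); rewrite -eot eo_out.
move=> eU e_inc e_new.
set y := if (ends G e).1 == s.1.1 then (ends G e).2 else (ends G e).1.
have [i] := cycle_detour e y sin st_cyc.
move: (rot i st) (mem_rot i st) => r r_st r_cyc.
have r_edges f : (f \in [seq t.1.2 | t <- r]) = (f \in [seq t.1.2 | t <- st]).
  by apply/mapP/mapP => -[t tin ->]; exists t; rewrite ?r_st // -r_st.
exists ((s.1.1, e, y) :: (y, e, s.1.1) :: r); split.
- rewrite /closed_walk r_cyc andbT /= joins_other // joins_sym joins_other //=.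
  by apply/allP => t; rewrite r_st; apply: st_joins.
- apply/and3P; split=> //; apply/allP => t; rewrite r_st; apply: (allP stU).
- rewrite /n_unused; apply: proper_card; apply/properP; split.
    by apply/subsetP => f; rewrite !inE /= !negb_or r_edges => /and3P[].
  by exists e; rewrite !inE ?e_new //= eqxx.
Qed.

Lemma closed_walk_cycle st : closed_walk st -> walk_inside U st -> exists st', is_cycle o st'.
Proof.
have [n] := ubnP (n_unused st); elim: n st => // n IH st /ltnSE le_n cw stU.
have [|not_cycle] := boolP (is_cycle o st); first by exists st.
have [st' [cw' st'U lt']] := closed_walk_detour cw stU not_cycle.
by apply: (IH st') => //; apply: leq_trans lt' le_n.
Qed.

End InAndOut.

Lemma acyclic_strict_extreme : acyclic o -> forall U, strict_extreme_on o U.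
Proof.
move=> [_ no_cycle] U /existsP [e0 e0U].
case: (boolP [exists (v | v \in U), arrows_at o U v true != arrows_at o U v false]).
  by move/exists_inP.
rewrite negb_exists_in => /forall_inP none; case: no_cycle.
have in_out : in_and_out U by apply: no_strict_extreme_in_and_out => v /none /negPn /eqP.
apply: (closed_walk_cycle in_out
  (st := [:: ((ends G e0).1, e0, (ends G e0).2); ((ends G e0).2, e0, (ends G e0).1)])).
  by rewrite /closed_walk /= /joins /= -!surjective_pairing !eqxx /= orbT.
by rewrite /walk_inside /= e0U.
Qed.

End Walks.

Lemma in_out_max_color (s1 s2 : bool) (kw ku ku' : int) :
  (`|ku| <= `|kw|)%N -> (`|ku'| <= `|kw|)%N ->
  bsign s1 * ku < kw -> kw <= bsign s2 * ku' -> kw != bsign s2 * ku' -> False.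
Proof. by rewrite /bsign; case: s1; case: s2; rewrite ?mul1r ?mulN1r; lia. Qed.

Lemma neq_bsign_sym (s : bool) (a b : int) : (a != bsign s * b) = (b != bsign s * a).
Proof. by rewrite /bsign; case: s; rewrite ?mul1r ?mulN1r; lia. Qed.

Section ColoringOrientation.
Variable G : sgraph.
Local Notation V := 'I_(nv G).
Local Notation step := ('I_(nv G) * 'I_(ne G) * 'I_(nv G))%type.

Definition coloring_ori (k : V -> int) : ori G :=
  [ffun e => (sgnz G e * k (ends G e).2 < k (ends G e).1,
              sgnz G e * k (ends G e).1 < k (ends G e).2)].

Lemma preservesE (o : ori G) k : preserves o k = (o == coloring_ori k).
Proof.
apply/forallP/eqP => [pres|->]; last by move=> e; rewrite ffunE !eqxx.
apply/ffunP => e; rewrite ffunE; have /andP[/eqP <- /eqP <-] := pres e.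
by rewrite -surjective_pairing.
Qed.

Lemma closed_walk_ends (st : seq step) t : closed_walk st -> t \in st ->
  ((ends G t.1.2).1 \in [seq s.1.1 | s <- st]) &&
  ((ends G t.1.2).2 \in [seq s.1.1 | s <- st]).
Proof.
move=> /and3P[_ /allP st_joins st_cyc] tin.
have t_start : t.1.1 \in [seq s.1.1 | s <- st] by apply: map_f.
have t_end : t.2 \in [seq s.1.1 | s <- st].
  by have /eqP -> := next_cycle st_cyc tin; apply: map_f; rewrite mem_next.
by move: (st_joins t tin); rewrite /joins => /orP[] /eqP -> /=; rewrite t_start t_end.
Qed.

(* On a cycle, a vertex w of maximal |k| has an arrow pointing in and one
   pointing out; both cannot hold for the orientation induced by k. *)
Lemma acyclic_coloring_ori k : Defs.proper k -> acyclic (coloring_ori k).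
Proof.
move=> /forallP pr; split.
  apply/forallP => e; rewrite ffunE /=; have := pr e; rewrite /sgnz.
  by case: (sgn G e); rewrite ?mul1r ?mulN1r; lia.
move=> [[|s0 st] /andP[cw /allP in_out]]; first by case/and3P: cw.
set W := [seq s.1.1 | s <- s0 :: st].
have s0W : s0.1.1 \in W by rewrite inE eqxx.
have [w wW wmax] := @arg_maxnP _ s0.1.1 (mem W) (fun u => `|k u|%N) s0W.
have [s sin sw] : exists2 s, s \in s0 :: st & s.1.1 = w.
  by move/mapP: wW => [s sin ->]; exists s.
have /andP[/hasP [ti ti_in w_in] /hasP [tu tu_in w_out]] := in_out s sin.
rewrite sw in w_in w_out.
have /andP[ti1 ti2] := closed_walk_ends cw ti_in.
have /andP[tu1 tu2] := closed_walk_ends cw tu_in.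
have pr' e : k (ends G e).2 != bsign (sgn G e) * k (ends G e).1.
  by rewrite -neq_bsign_sym; apply: (pr e).
move: w_in w_out; rewrite /into_at /out_at !ffunE /= /sgnz -/(bsign _).
have contra := in_out_max_color (s1 := sgn G ti.1.2) (s2 := sgn G tu.1.2).
case/orP => /andP[/eqP w1 w_in]; case/orP => /andP[/eqP w2 w_out].
- apply: (contra _ _ _ (wmax _ ti2) (wmax _ tu2));
    [by rewrite -w1 | by rewrite -w2 leNgt | by rewrite -w2; apply: pr].
- apply: (contra _ _ _ (wmax _ ti2) (wmax _ tu1));
    [by rewrite -w1 | by rewrite -w2 leNgt | by rewrite -w2; apply: pr'].
- apply: (contra _ _ _ (wmax _ ti1) (wmax _ tu2));
    [by rewrite -w1 | by rewrite -w2 leNgt | by rewrite -w2; apply: pr].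
- apply: (contra _ _ _ (wmax _ ti1) (wmax _ tu1));
    [by rewrite -w1 | by rewrite -w2 leNgt | by rewrite -w2; apply: pr'].
Qed.

Lemma Xcoef_sum_Ycoef (s : seq int) : Xcoef G s = \sum_(o : ori G | acyclicb o) Ycoef o s.
Proof.
rewrite /Xcoef /Ycoef -sum1dep_card.
rewrite (partition_big (fun f : {ffun V -> seq_sub s} => coloring_ori (fun v => val (f v)))
          (fun o : ori G => acyclicb o)); last first.
  by move=> f /andP[pr _]; apply/asboolP; apply: acyclic_coloring_ori.
apply: eq_bigr => o _; rewrite sum1dep_card; apply: eq_card => f; rewrite !inE.
rewrite preservesE (eq_sym o).
by case: (Defs.proper _); case: (perm_eq _ _); case: (_ == _).
Qed.

End ColoringOrientation.

Definition word d k (t : {ffun 'I_d -> 'I_(k.+1.*2.+1)}) : seq int :=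
  [seq zcol (t i) | i <- enum 'I_d].

Definition nwords d k (L : seq int) : nat :=
  #|[set t : {ffun 'I_d -> 'I_(k.+1.*2.+1)} | perm_eq (word t) L]|.

Definition mark_weight (x : option bool) : {poly rat} :=
  match x with Some true => 'X - 1 | Some false => 0 | None => -1 end.

Definition color_weight k (z : int) : {poly rat} := mark_weight (mark_of k z).

(* [phi_at d k F] evaluates the series with coefficient function F, restricted
   to monomials of degree d, at x_(k+1) = t - 1, x_(-(k+1)) = 0, x_i = -1 for
   |i| <= k and x_i = 0 otherwise; dividing by [nwords] turns the sum over
   monomials into a sum over words. *)
Definition phi_at d k (F : seq int -> rat) : {poly rat} :=
  \sum_(t : {ffun 'I_d -> 'I_(k.+1.*2.+1)})
     (F (word t) / (nwords d k (word t))%:R) *: \prod_(i < d) color_weight k (zcol (t i)).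

Definition phi_deg d (F : seq int -> rat) : {poly rat} :=
  extrap_m1 d (fun k => phi_at d k F).

Lemma phi_at_sum d k (I : Type) (r : seq I) (P : pred I) (c : I -> rat)
    (F : I -> seq int -> rat) :
  phi_at d k (fun s => \sum_(x <- r | P x) c x * F x s) =
  \sum_(x <- r | P x) c x *: phi_at d k (F x).
Proof.
rewrite /phi_at; under eq_bigr do rewrite mulr_suml scaler_suml.
rewrite exchange_big; apply: eq_bigr => x _; rewrite scaler_sumr.
by apply: eq_bigr => t _; rewrite scalerA mulrA.
Qed.

Lemma phi_deg_sum d (I : Type) (r : seq I) (P : pred I) (c : I -> rat)
    (F : I -> seq int -> rat) :
  phi_deg d (fun s => \sum_(x <- r | P x) c x * F x s) =
  \sum_(x <- r | P x) c x *: phi_deg d (F x).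
Proof.
rewrite /phi_deg; under eq_extrap_m1 => k do rewrite phi_at_sum.
rewrite extrap_m1_sum; apply: eq_bigr => x _.
under eq_extrap_m1 => k do rewrite -mul_polyC.
by rewrite -mul_polyC; apply: extrap_m1_mull.
Qed.

Definition zcol_inv k (z : int) : 'I_(k.+1.*2.+1) := inord (absz (z + k.+1%:Z)).

Lemma zcolK k : cancel (@zcol k.+1) (zcol_inv k).
Proof.
move=> c; apply: val_inj; rewrite /zcol_inv /zcol /= inordK; have := ltn_ord c;
  move: (nat_of_ord c) => n; rewrite -?addnn; lia.
Qed.

Lemma size_word d k t : size (@word d k t) = d.
Proof. by rewrite size_map size_enum_ord. Qed.

Section WordsOfColorings.
Variables (H : sgraph) (p : ori H) (d k : nat).
Local Notation V := 'I_(nv H).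
Local Notation coloring := {ffun V -> 'I_(k.+1.*2.+1)}.

Definition coloring_word (x : coloring) := [seq zcol (x v) | v <- enum V].

Definition colors_ok (x : coloring) :=
  Defs.proper (fun v => zcol (x v)) && preserves p (fun v => zcol (x v)).

Lemma Ycoef_word (t : {ffun 'I_d -> 'I_(k.+1.*2.+1)}) :
  Ycoef p (word t) = #|[set x | colors_ok x && perm_eq (coloring_word x) (word t)]|.
Proof.
rewrite /Ycoef; set s := word t.
have zcol_s z : z \in s -> zcol (zcol_inv k z) = z by case/mapP => i _ ->; rewrite zcolK.
symmetry; pose toI (f : {ffun V -> seq_sub s}) := [ffun v => zcol_inv k (val (f v))].
apply: (card_in_bij (f := toI)).
- move=> f1 f2 _ _ /ffunP f12; apply/ffunP => v; apply: val_inj.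
  have := f12 v; rewrite !ffunE => /(congr1 (@zcol _)).
  by rewrite !zcol_s ?(ssvalP (f1 v)) ?(ssvalP (f2 v)).
- move=> f; rewrite !inE => /and3P[pr pres pe].
  have fE : (fun v => zcol ([ffun v => zcol_inv k (val (f v))] v)) = (fun v => val (f v)).
    by apply: funext => v; rewrite ffunE zcol_s // (ssvalP (f v)).
  by rewrite /colors_ok /coloring_word fE pr pres.
- move=> x; rewrite inE => /andP[ok pe].
  have xs v : zcol (x v) \in s by rewrite -(perm_mem pe); apply: map_f; rewrite mem_enum.
  exists [ffun v => SeqSub (xs v)]; last by apply/ffunP => v; rewrite !ffunE /= zcolK.
  have xE : (fun v => val ([ffun v => SeqSub (xs v)] v)) = (fun v => zcol (x v)).
    by apply: funext => v; rewrite ffunE.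
  by rewrite inE xE; case/andP: ok => -> ->.
Qed.

Lemma nwords_perm (L1 L2 : seq int) : perm_eq L1 L2 -> nwords d k L2 = nwords d k L1.
Proof.
move=> pe; apply: eq_card => t'; rewrite !inE.
by apply/idP/idP => h; apply: perm_trans h _; rewrite // perm_sym.
Qed.

Lemma prod_weights_perm (x : coloring) (t : {ffun 'I_d -> 'I_(k.+1.*2.+1)}) :
  perm_eq (coloring_word x) (word t) ->
  \prod_(i < d) color_weight k (zcol (t i)) = \prod_v color_weight k (zcol (x v)).
Proof.
move=> pe.
have -> : \prod_(i < d) color_weight k (zcol (t i)) = \prod_(z <- word t) color_weight k z.
  by rewrite big_map big_enum.
have -> : \prod_v color_weight k (zcol (x v)) = \prod_(z <- coloring_word x) color_weight k z.
  by rewrite big_map big_enum.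
by apply: perm_big; rewrite perm_sym.
Qed.

Lemma nwords_coloring_word (x : coloring) : (nwords d k (coloring_word x) != 0%N) = (nv H == d).
Proof.
case: (nv H =P d) => [Hd|Hd].
  rewrite -lt0n; apply/card_gt0P.
  set L := [seq x v | v <- enum V].
  exists [ffun i : 'I_d => nth ord0 L i]; rewrite inE.
  suff -> : word [ffun i : 'I_d => nth ord0 L i] = coloring_word x by [].
  rewrite /word /coloring_word.
  have -> : [seq zcol ([ffun i : 'I_d => nth ord0 L i] i) | i <- enum 'I_d]
          = [seq zcol (nth ord0 L n) | n <- [seq val i | i <- enum 'I_d]].
    by rewrite -map_comp; apply: eq_map => i; rewrite /= ffunE.
  rewrite val_enum_ord (map_comp (@zcol _) (nth ord0 L)) map_nth_iota0; last first.
    by rewrite size_map size_enum_ord Hd.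
  rewrite take_oversize; last by rewrite size_map size_enum_ord Hd.
  by rewrite -map_comp.
apply/negbTE; rewrite negbK cards_eq0; apply/eqP/setP => t; rewrite !inE.
apply/negbTE/negP => /perm_size; rewrite size_word size_map size_enum_ord.
by move=> dH; apply: Hd.
Qed.

Lemma phi_at_Ycoef : phi_at d k (fun s => (Ycoef p s)%:R) =
  (nv H == d)%:R *: \sum_(x | colors_ok x) \prod_v color_weight k (zcol (x v)).
Proof.
rewrite /phi_at; under eq_bigr do rewrite Ycoef_word.
have card_sum (t : {ffun 'I_d -> 'I_(k.+1.*2.+1)}) :
    #|[set x | colors_ok x && perm_eq (coloring_word x) (word t)]|%:R =
    \sum_(x | colors_ok x) (perm_eq (coloring_word x) (word t))%:R :> rat.
  rewrite -sum1dep_card natr_sum big_mkcondr /=.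
  by apply: eq_bigr => x _; case: (perm_eq _ _).
under eq_bigr do rewrite card_sum mulr_suml scaler_suml.
rewrite exchange_big scaler_sumr; apply: eq_bigr => x x_ok.
under eq_bigr => t _.
  have -> : ((perm_eq (coloring_word x) (word t))%:R / (nwords d k (word t))%:R) *:
              \prod_(i < d) color_weight k (zcol (t i)) =
            ((perm_eq (coloring_word x) (word t))%:R / (nwords d k (coloring_word x))%:R) *:
              \prod_v color_weight k (zcol (x v)).
    case pe: (perm_eq _ _); last by rewrite !mul0r !scale0r.
    by rewrite (nwords_perm pe) (prod_weights_perm pe).
  over.
rewrite -scaler_suml -mulr_suml.
have -> : \sum_(t : {ffun 'I_d -> 'I_(k.+1.*2.+1)}) (perm_eq (coloring_word x) (word t))%:R
          = (nwords d k (coloring_word x))%:R :> rat.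
  rewrite /nwords -sum1dep_card natr_sum [RHS]big_mkcond /=.
  by apply: eq_bigr => t _; rewrite perm_sym; case: (perm_eq _ _).
rewrite -(nwords_coloring_word x).
case: (nwords d k (coloring_word x) =P 0%N) => [->|nz]; first by rewrite mul0r scale0r.
by rewrite divff // pnatr_eq0; apply/eqP.
Qed.

End WordsOfColorings.

Section PhiOfSignedPoset.
Variables (H : sgraph) (p : ori H).
Local Notation V := 'I_(nv H).

Lemma colors_ok_colorings k (x : {ffun V -> 'I_(k.+1.*2.+1)}) :
  colors_ok p x = (x \in colorings p k.+1 setT).
Proof.
rewrite inE /ok_on /colors_ok /Defs.proper /preserves.
have -> : [forall v, (v \notin setT) ==> (zcol (x v) == 0)] by apply/forallP => v; rewrite inE.
apply/andP/forallP => [[/forallP pr /forallP pres] e | ok].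
  rewrite /inside !inE /=; have /andP[? ?] := pres e.
  by apply/and3P; split=> //; apply: pr.
by split; apply/forallP => e; have := ok e; rewrite /inside !inE /= => /and3P[] // _ -> ->.
Qed.

Lemma sum_weights_by_marks k : valid_ori p ->
  \sum_(x : {ffun V -> 'I_(k.+1.*2.+1)} | colors_ok p x) \prod_v color_weight k (zcol (x v)) =
  \sum_(ch | admissible p setT ch)
    (\prod_v mark_weight (ch v)) * ncolr p {poly rat} (unmarked setT ch) k.
Proof.
move=> p_valid; rewrite (eq_bigl (fun x => x \in colorings p k.+1 setT)); last first.
  by move=> x; rewrite colors_ok_colorings.
rewrite -(sum_colorings_by_marks p_valid k setT (fun ch => \prod_v mark_weight (ch v))).
by apply: eq_bigr => x _; apply: eq_bigr => v _; rewrite ffunE.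
Qed.

Lemma nsinks_arrows : nsinks p = #|[set v | arrows_at p setT v true]|.
Proof.
apply: eq_card => v; rewrite !inE /is_sink /arrows_at inE /=.
by apply: eq_forallb => e; rewrite /inside !inE /= !eqb_id.
Qed.

(* Reciprocity turns the factor -1 of each unmarked vertex into (-1)(-1) = 1,
   so every vertex contributes 1 + [sink](t - 1), i.e. t for a sink, 1 otherwise. *)
Lemma extrap_weights d : acyclic p -> nv H = d ->
  extrap_m1 d (fun k => \sum_(x : {ffun V -> 'I_(k.+1.*2.+1)} | colors_ok p x)
                          \prod_v color_weight k (zcol (x v))) = 'X^(nsinks p).
Proof.
move=> p_acyclic Hd; have [p_valid _] := p_acyclic.
under eq_extrap_m1 => k do rewrite sum_weights_by_marks //.
rewrite extrap_m1_sum.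
have recip := ncol_reciprocity {poly rat} p_valid (acyclic_strict_extreme p_acyclic).
pose F (v : V) x := mark_weight x * (if (v \in setT) && (x == None) then -1 else 1).
rewrite (eq_bigr (fun ch : {ffun V -> option bool} => \prod_v F v (ch v))) => [|ch _]; last first.
  have leUd : (#|unmarked setT ch| <= d)%N.
    by apply: leq_trans (max_card _) _; rewrite card_ord Hd.
  rewrite extrap_m1_mull (proj2 (recip _ _ leUd)) big_split /= -prodr_const.
  by congr (_ * _); rewrite [LHS]big_mkcond; apply: eq_bigr => v _; rewrite inE.
rewrite sum_admissible_prod nsinks_arrows -prodr_const [RHS]big_mkcond /=.
apply: eq_bigr => v _; rewrite /F !inE /=.
by case: (arrows_at p setT v true); case: (arrows_at p setT v false) => /=; ring.
Qed.

Lemma phi_deg_Ycoef d : acyclic p ->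
  phi_deg d (fun s => (Ycoef p s)%:R) = (nv H == d)%:R *: 'X^(nsinks p).
Proof.
move=> p_acyclic; rewrite /phi_deg.
under eq_extrap_m1 => k do rewrite phi_at_Ycoef -mul_polyC.
rewrite (extrap_m1_mull _ _ (fun k => \sum_(x : {ffun V -> 'I_(k.+1.*2.+1)} | colors_ok p x)
                          \prod_v color_weight k (zcol (x v)))) mul_polyC.
by case: (nv H =P d) => [Hd|_]; [rewrite extrap_weights | rewrite !scale0r].
Qed.

End PhiOfSignedPoset.

Lemma sum_ord_eq_scale n B (v : {poly rat}) : (n < B)%N -> \sum_(d < B) (n == d)%:R *: v = v.
Proof.
move=> ltnB; rewrite (bigD1 (Ordinal ltnB)) //= eqxx scale1r big1 ?addr0 // => d.
by rewrite -val_eqE /= eq_sym => /negbTE ->; rewrite scale0r.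
Qed.

Lemma sum_split_nv (rep : seq (rat * sposet)) B (F : rat * sposet -> {poly rat}) :
  (\sum_(q <- rep) nv (spG q.2) < B)%N ->
  \sum_(q <- rep) F q = \sum_(q <- rep) \sum_(d < B) (nv (spG q.2) == d)%:R *: F q.
Proof.
elim: rep => [|q rep IH]; rewrite ?big_nil // !big_cons => ltB.
rewrite sum_ord_eq_scale; last by apply: leq_ltn_trans ltB; apply: leq_addr.
by rewrite IH //; apply: leq_ltn_trans ltB; apply: leq_addl.
Qed.

Lemma eq_big_sposets (rep : seq (rat * sposet)) (F F' : rat * sposet -> {poly rat}) :
  all_sposets rep -> (forall q, is_sposet q.2 -> F q = F' q) ->
  \sum_(q <- rep) F q = \sum_(q <- rep) F' q.
Proof.
elim: rep => [|q rep IH] /=; rewrite ?big_nil // => -[q_sp rep_sp] FF'.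
by rewrite !big_cons FF' // IH.
Qed.

Lemma sum_acyclic_sinks (G : sgraph) :
  \sum_(o : ori G | acyclicb o) 'X^(nsinks o) =
  \sum_(k < (nv G).+1) (acyc G k)%:R *: 'X^k :> {poly rat}.
Proof.
have sinks_le (o : ori G) : (nsinks o < (nv G).+1)%N.
  by rewrite ltnS /nsinks; apply: leq_trans (max_card _) _; rewrite card_ord.
rewrite (partition_big (fun o : ori G => Ordinal (sinks_le o)) xpredT) //=.
apply: eq_bigr => k _; rewrite (eq_bigr (fun _ => 'X^k)) => [|o /andP[_ /eqP <-] //].
rewrite sumr_const scaler_nat /acyc; congr (_ *+ _); apply: eq_card => o.
by rewrite !inE unfold_in -val_eqE.
Qed.

Lemma all_sposets_acyclic (G : sgraph) (l : seq (ori G)) :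
  all (@acyclicb G) l -> all_sposets [seq (1 : rat, SPoset o) | o <- l].
Proof.
elim: l => [|o l IH] //= /andP[o_acyclic l_acyclic]; split; last exact: IH.
exact/asboolP.
Qed.

Lemma phi_deg_Xcoef (G : sgraph) d :
  phi_deg d (fun s => (Xcoef G s)%:R) =
  \sum_(o : ori G | acyclicb o) (nv G == d)%:R *: 'X^(nsinks o).
Proof.
transitivity (phi_deg d (fun s => \sum_(o : ori G | acyclicb o) 1 * (Ycoef o s)%:R)).
  congr phi_deg; apply: funext => s.
  by rewrite Xcoef_sum_Ycoef natr_sum; under [RHS]eq_bigr do rewrite mul1r.
rewrite phi_deg_sum; apply: eq_bigr => o /asboolP o_acyclic.
by rewrite scale1r phi_deg_Ycoef.
Qed.

Lemma phi_deg_Ycomb (rep : seq (rat * sposet)) d : all_sposets rep ->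
  phi_deg d (Ycomb rep) =
  \sum_(q <- rep) (nv (spG q.2) == d)%:R *: (q.1 *: 'X^(nsinks (spO q.2))).
Proof.
move=> rep_sp; rewrite /Ycomb phi_deg_sum; apply: eq_big_sposets => // q q_sp.
by rewrite phi_deg_Ycoef // !scalerA mulrC.
Qed.

Lemma Xcoef_Ycomb_acyclic (G : sgraph) :
  exists rep, all_sposets rep /\ forall s, (Xcoef G s)%:R = Ycomb rep s.
Proof.
exists [seq (1 : rat, SPoset o) | o <- enum (@acyclicb G)]; split.
  by apply: all_sposets_acyclic; apply/allP => o; rewrite mem_enum.
move=> s; rewrite /Ycomb big_map big_enum /= Xcoef_sum_Ycoef natr_sum.
by apply: eq_bigr => o _; rewrite mul1r.
Qed.

Theorem theorem6p1 (G : sgraph) :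
  (exists rep : seq (rat * sposet),
      all_sposets rep /\
      (forall s : seq int, (Xcoef G s)%:R = Ycomb rep s)) /\
  (forall rep : seq (rat * sposet),
      all_sposets rep ->
      (forall s : seq int, (Xcoef G s)%:R = Ycomb rep s) ->
      phi_rep rep = \sum_(k < (nv G).+1) (acyc G k)%:R *: 'X^k).
Proof.
split; first exact: Xcoef_Ycomb_acyclic.
move=> rep rep_sp XY.
have phi_deg_eq d :
    \sum_(q <- rep) (nv (spG q.2) == d)%:R *: (q.1 *: 'X^(nsinks (spO q.2))) =
    \sum_(o : ori G | acyclicb o) (nv G == d)%:R *: 'X^(nsinks o).
  by rewrite -phi_deg_Ycomb // -phi_deg_Xcoef; congr phi_deg; apply: funext.
pose B := (nv G + \sum_(q <- rep) nv (spG q.2)).+1.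
rewrite /phi_rep (@sum_split_nv rep B) ?ltnS ?leq_addl // exchange_big /=.
under eq_bigr do rewrite phi_deg_eq.
rewrite exchange_big -sum_acyclic_sinks /=; apply: eq_bigr => o _.
by rewrite sum_ord_eq_scale // ltnS leq_addr.
Qed.
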